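(* For a non-negative integer $N$, let $\mathcal{Z}_N:=\sum_{c=0}^{N}\mathbb{Q}\cdot\zeta(-c,s+c)$ and $\mathcal{Z}:=\bigcup_{N\ge0}\mathcal{Z}_N$ (the $\mathbb{Q}$-vector spaces of meromorphic functions of $s$ spanned by these functions). Then $$\mathcal{Z}_N=\bigoplus_{\substack{c \text{ even}\\0\le c\le N}}\mathbb{Q}\cdot\zeta(-c,s+c),\qquad \mathcal{Z}=\bigoplus_{\substack{c\text{ even}\\ c\ge0}}\mathbb{Q}\cdot\zeta(-c,s+c),$$ and $\dim_{\mathbb{Q}}\mathcal{Z}_N=\lfloor N/2\rfloor+1$.
   Context: For an integer $c\ge 0$, $\zeta(-c,s+c)$ denotes the Euler–Zagier double zeta function $\zeta(s_1,s_2)=\sum_{1\le n_1<n_2} n_1^{-s_1}n_2^{-s_2}$ evaluated at $(s_1,s_2)=(-c,s+c)$; i.e. it is the meromorphic continuation to all $s\in\mathbb{C}$ of the series $\sum_{m,n\ge1} m^{c}(m+n)^{-s-c}$, which converges absolutely for $\Re(s)>2$. The direct sum notation means that the functions $\zeta(-c,s+c)$ with $c$ even in the indicated range are linearly independent over $\mathbb{Q}$ and span the space. *)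

From Stdlib Require Import Reals QArith Qreals List.
From Coquelicot Require Import Coquelicot.
Import ListNotations.
Open Scope R_scope.

(* n^(-w) for a natural number n >= 1 and complex w:
   exp(-w log n) = e^{-Re w log n} (cos(Im w log n) - i sin(Im w log n)). *)
Definition npow_neg (n : nat) (w : C) : C :=
  Cmult (RtoC (exp (- (Re w) * ln (INR n))))
        (cos (Im w * ln (INR n)), - sin (Im w * ln (INR n))).

Fixpoint csum (f : nat -> C) (N : nat) : C :=
  match N with
  | O => f O
  | S k => Cplus (csum f k) (f (S k))
  end.

Definition dz_term (c : nat) (s : C) (n : nat) : C :=
  Cmult (npow_neg n (Cplus s (RtoC (INR c))))
        (RtoC (fold_right Rplus 0 (map (fun m => INR m ^ c) (seq 1 (n - 1))))).

(* zeta(-c, s+c) = sum_{1 <= m < n} m^c n^{-s-c}, summed (absolutely convergent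
   for Re s > 2) with the outer index n; real and imaginary parts separately. *)
Definition dzeta (c : nat) (s : C) : C :=
  (Series (fun n => Re (dz_term c s n)), Series (fun n => Im (dz_term c s n))).

Definition Hdom (s : C) : Prop := 2 < Re s.

Definition zcomb (P : nat -> bool) (q : nat -> Q) (N : nat) (s : C) : C :=
  csum (fun c => if P c then Cmult (RtoC (Q2R (q c))) (dzeta c s) else RtoC 0) N.

Definition in_span (P : nat -> bool) (N : nat) (f : C -> C) : Prop :=
  exists q : nat -> Q, forall s, Hdom s -> f s = zcomb P q N s.

Definition all_c (c : nat) : bool := true.

Definition ZN (N : nat) (f : C -> C) : Prop := in_span all_c N f.
Definition Zall (f : C -> C) : Prop := exists N, ZN N f.

Definition lin_indep (P : nat -> bool) (N : nat) : Prop :=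
  forall q : nat -> Q, (forall s, Hdom s -> zcomb P q N s = RtoC 0) ->
    forall c, (c <= N)%nat -> P c = true -> (q c == 0)%Q.

Definition fam_comb (b : nat -> C -> C) (q : nat -> Q) (d : nat) (s : C) : C :=
  fold_right Cplus (RtoC 0) (map (fun i => Cmult (RtoC (Q2R (q i))) (b i s)) (seq 0 d)).

Definition has_Qdim (V : (C -> C) -> Prop) (d : nat) : Prop :=
  exists b : nat -> C -> C,
    (forall i, (i < d)%nat -> V (b i)) /\
    (forall q : nat -> Q, (forall s, Hdom s -> fam_comb b q d s = RtoC 0) ->
       forall i, (i < d)%nat -> (q i == 0)%Q) /\
    (forall f, V f -> exists q : nat -> Q, forall s, Hdom s -> f s = fam_comb b q d s).

From Stdlib Require Import Reals QArith Qreals List ZArith Znumtheory Lia Lra.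
From Coquelicot Require Import Coquelicot.
Open Scope R_scope.

(* Writing A_c(n) = sum_{0<m<n} (m/n)^c ([dz_coef c n]), zeta(-c, s+c) is the
   Dirichlet series sum_n A_c(n) n^-s, whose coefficients are O(n); such a series
   determines its coefficients, so the Q-linear relations among the zeta(-c, s+c) are
   exactly those among the sequences A_c.

   Pairing m with n - m gives 2 A_c(n) = sum_m p_c(x_m (1 - x_m)) with x_m = m/n, where
   x^c + (1-x)^c = p_c(x (1-x)) ([sym_poly c]).  Since p_(2K+1) is a Q-combination of
   p_0, p_2, ..., p_2K, every odd A_(2K+1) is a Q-combination of A_0, A_2, ..., A_2K.

   The even A_2j are independent: at n = 2^k, clearing denominators in
   sum_(j<=K) q_j A_2j(2^k) = 0 gives sum_j z_j s_j(k) 2^(2k(K-j)) = 0, where the power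
   sum s_j(k) = sum_(m<2^k) m^2j has 2-adic valuation exactly k - 1 for j >= 1; hence
   2^(k+1) divides z_K for every k, so z_K = 0. *)

Definition rsum (f : nat -> R) (a n : nat) : R := fold_right Rplus 0 (map f (seq a n)).

Lemma rsum_Sl f a n : rsum f a (S n) = f a + rsum f (S a) n.
Proof. reflexivity. Qed.

Lemma rsum_Sr f a n : rsum f a (S n) = rsum f a n + f (a + n)%nat.
Proof.
  revert a; induction n as [|n IH]; intros a.
  - unfold rsum; simpl; rewrite Nat.add_0_r; ring.
  - rewrite rsum_Sl, IH, rsum_Sl; replace (S a + n)%nat with (a + S n)%nat by lia; ring.
Qed.

Lemma rsum_ext_in f g a n :
  (forall m, (a <= m < a + n)%nat -> f m = g m) -> rsum f a n = rsum g a n.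
Proof.
  intros H; unfold rsum; f_equal; apply map_ext_in; intros m Hm; apply in_seq in Hm; auto.
Qed.

Lemma rsum_ext f g a n : (forall m, f m = g m) -> rsum f a n = rsum g a n.
Proof. intros H; apply rsum_ext_in; auto. Qed.

Lemma rsum_plus f g a n : rsum (fun m => f m + g m) a n = rsum f a n + rsum g a n.
Proof.
  revert a; induction n as [|n IH]; intros a; [unfold rsum; simpl; ring|].
  rewrite !rsum_Sl, IH; ring.
Qed.

Lemma rsum_scal k f a n : rsum (fun m => k * f m) a n = k * rsum f a n.
Proof.
  revert a; induction n as [|n IH]; intros a; [unfold rsum; simpl; ring|].
  rewrite !rsum_Sl, IH; ring.
Qed.

Lemma rsum_const0 a n : rsum (fun _ => 0) a n = 0.
Proof. rewrite (rsum_ext _ (fun _ => 0 * 0)) by (intros; ring); rewrite rsum_scal; ring. Qed.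

Lemma rsum_delta f a n j : (a <= j < a + n)%nat ->
  rsum (fun i => if (i =? j)%nat then f i else 0) a n = f j.
Proof.
  revert a; induction n as [|n IH]; intros a Hj; [lia|].
  rewrite rsum_Sl; destruct (Nat.eq_dec a j) as [<-|Hne].
  - rewrite Nat.eqb_refl, rsum_ext_in with (g := fun _ => 0), rsum_const0; [ring|].
    intros i Hi; replace (i =? a)%nat with false by (symmetry; apply Nat.eqb_neq; lia); reflexivity.
  - rewrite (proj2 (Nat.eqb_neq a j) Hne), IH by lia; ring.
Qed.

Lemma rsum_rev f a n : rsum f a n = rsum (fun m => f (2 * a + n - 1 - m)%nat) a n.
Proof.
  revert f a; induction n as [|n IH]; intros f a; [reflexivity|].
  rewrite rsum_Sl, IH, rsum_Sr, Rplus_comm.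
  replace (2 * a + S n - 1 - (a + n))%nat with a by lia.
  unfold rsum; rewrite <- seq_shift, map_map; do 2 f_equal; apply map_ext_in.
  intros m Hm; apply in_seq in Hm; f_equal; lia.
Qed.

Lemma rsum_swap (F : nat -> nat -> R) a n b K :
  rsum (fun m => rsum (fun j => F j m) b K) a n = rsum (fun j => rsum (F j) a n) b K.
Proof.
  revert b; induction K as [|K IH]; intros b.
  - apply rsum_const0.
  - rewrite rsum_Sl, <- IH, <- rsum_plus; apply rsum_ext; intros m; simpl; reflexivity.
Qed.

Lemma rsum_bound f a n B :
  (forall m, (a <= m < a + n)%nat -> 0 <= f m <= B) -> 0 <= rsum f a n <= INR n * B.
Proof.
  revert a; induction n as [|n IH]; intros a H; [unfold rsum; simpl; lra|].
  rewrite rsum_Sl, S_INR.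
  destruct (IH (S a)) as [h1 h2]; [intros; apply H; lia|].
  destruct (H a ltac:(lia)); nra.
Qed.

Lemma sum_f_R0_even (F : nat -> R) N :
  sum_f_R0 (fun c => if Nat.even c then F c else 0) N
  = rsum (fun j => F (2 * j)%nat) 0 (S (Nat.div2 N)).
Proof.
  set (G := fun c => if Nat.even c then F c else 0).
  assert (H : forall K, sum_f_R0 G (2 * K) = rsum (fun j => F (2 * j)%nat) 0 (S K)
                     /\ sum_f_R0 G (S (2 * K)) = rsum (fun j => F (2 * j)%nat) 0 (S K)).
  { induction K as [|K [Heven Hodd]].
    - unfold G; simpl; unfold rsum; simpl; split; ring.
    - assert (Heven' : sum_f_R0 G (2 * S K) = rsum (fun j => F (2 * j)%nat) 0 (S (S K))).
      { replace (2 * S K)%nat with (S (S (2 * K))) by lia.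
        rewrite tech5, Hodd, (rsum_Sr _ 0 (S K)); unfold G.
        replace (S (S (2 * K))) with (2 * S K)%nat by lia.
        rewrite Nat.even_even; reflexivity. }
      split; [exact Heven'|].
      rewrite tech5; rewrite Heven'; unfold G.
      replace (S (2 * S K)) with (2 * S K + 1)%nat by lia; rewrite Nat.even_odd; ring. }
  rewrite (Nat.div2_odd N) at 1; destruct (Nat.odd N); cbn [Nat.b2n].
  - rewrite Nat.add_1_r; apply H.
  - rewrite Nat.add_0_r; apply H.
Qed.

Definition dz_coef (c n : nat) : R := rsum (fun m => INR m ^ c) 1 (n - 1) / INR n ^ c.

Lemma dz_coef_mean c n : (1 <= n)%nat ->
  dz_coef c n = rsum (fun m => (INR m / INR n) ^ c) 1 (n - 1).
Proof.
  intros Hn; unfold dz_coef, Rdiv; rewrite Rmult_comm, <- rsum_scal.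
  apply rsum_ext; intros m; rewrite Rpow_mult_distr, pow_inv; ring.
Qed.

Lemma dz_coef_bounds c n : 0 <= dz_coef c n <= INR n.
Proof.
  destruct n as [|n]; [unfold dz_coef, rsum; simpl; lra|].
  rewrite dz_coef_mean by lia.
  assert (Hn : 0 < INR (S n)) by (apply lt_0_INR; lia).
  destruct (rsum_bound (fun m => (INR m / INR (S n)) ^ c) 1 (S n - 1) 1) as [h1 h2].
  - intros m Hm.
    assert (Hm' : INR m <= INR (S n)) by (apply le_INR; lia).
    assert (Hx : 0 <= INR m / INR (S n) <= 1).
    { split; [apply Rdiv_le_0_compat; [apply pos_INR | exact Hn]|].
      apply Rmult_le_reg_r with (INR (S n)); [lra|].
      unfold Rdiv; rewrite Rmult_assoc, Rinv_l by lra; lra. }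
    split; [apply pow_le; lra|]. rewrite <- (pow1 c); apply pow_incr; lra.
  - rewrite minus_INR in h2 by lia; change (INR 1) with 1 in h2; lra.
Qed.

(** * Odd coefficients in terms of even ones *)

Fixpoint sym_poly (c : nat) (u : R) : R :=
  match c with
  | O => 2
  | S O => 1
  | S ((S k) as k1) => sym_poly k1 u - u * sym_poly k u
  end.

Lemma sym_poly_SS c u : sym_poly (S (S c)) u = sym_poly (S c) u - u * sym_poly c u.
Proof. reflexivity. Qed.

Lemma sym_poly_eval c x : sym_poly c (x * (1 - x)) = x ^ c + (1 - x) ^ c.
Proof.
  enough (H : sym_poly c (x * (1 - x)) = x ^ c + (1 - x) ^ c
              /\ sym_poly (S c) (x * (1 - x)) = x ^ S c + (1 - x) ^ S c) by apply H.
  induction c as [|c [IH IHS]]; [simpl; split; ring|].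
  split; [exact IHS|]. rewrite sym_poly_SS, IH, IHS; simpl; ring.
Qed.

Lemma dz_coef_sym c n :
  2 * dz_coef c n = rsum (fun m => sym_poly c (INR m / INR n * (1 - INR m / INR n))) 1 (n - 1).
Proof.
  destruct n as [|n]; [unfold dz_coef, rsum; simpl; unfold Rdiv; ring|].
  rewrite dz_coef_mean by lia.
  rewrite (rsum_ext (fun m => sym_poly c _)
             (fun m => (INR m / INR (S n)) ^ c + (1 - INR m / INR (S n)) ^ c))
    by (intros; apply sym_poly_eval).
  rewrite rsum_plus, (rsum_rev (fun m => (1 - _) ^ c)).
  enough (Hrev : rsum (fun m => (1 - INR (2 * 1 + (S n - 1) - 1 - m) / INR (S n)) ^ c) 1 (S n - 1)
                 = rsum (fun m => (INR m / INR (S n)) ^ c) 1 (S n - 1)) by (rewrite Hrev; ring).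
  apply rsum_ext_in; intros m Hm.
  replace (2 * 1 + (S n - 1) - 1 - m)%nat with (S n - m)%nat by lia.
  rewrite minus_INR by lia; f_equal; field; apply not_0_INR; lia.
Qed.

Definition even_span (K : nat) (f : R -> R) : Prop :=
  exists h : nat -> Q, forall u, f u = rsum (fun j => Q2R (h j) * sym_poly (2 * j) u) 0 (S K).

Lemma even_span_ext K f g : (forall u, f u = g u) -> even_span K f -> even_span K g.
Proof. intros Hfg [h Hh]; exists h; intros u; rewrite <- Hfg; apply Hh. Qed.

Lemma even_span_zero K : even_span K (fun _ => 0).
Proof.
  exists (fun _ => 0%Q); intros u; symmetry.
  rewrite (rsum_ext _ (fun _ => 0)) by (intros; rewrite RMicromega.Q2R_0; ring).
  apply rsum_const0.
Qed.

Lemma even_span_plus K f g :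
  even_span K f -> even_span K g -> even_span K (fun u => f u + g u).
Proof.
  intros [h1 H1] [h2 H2]; exists (fun j => h1 j + h2 j)%Q; intros u.
  rewrite H1, H2, <- rsum_plus; apply rsum_ext; intros j; rewrite Q2R_plus; ring.
Qed.

Lemma even_span_scal K k f : even_span K f -> even_span K (fun u => Q2R k * f u).
Proof.
  intros [h H]; exists (fun j => k * h j)%Q; intros u.
  rewrite H, <- rsum_scal; apply rsum_ext; intros j; rewrite Q2R_mult; ring.
Qed.

Lemma even_span_sym_poly K j : (j <= K)%nat -> even_span K (sym_poly (2 * j)).
Proof.
  intros Hj; exists (fun i => if (i =? j)%nat then 1%Q else 0%Q); intros u.
  rewrite (rsum_ext _ (fun i => if (i =? j)%nat then sym_poly (2 * i) u else 0)).
  - rewrite rsum_delta by lia; reflexivity.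
  - intros i; destruct (i =? j)%nat;
      [rewrite RMicromega.Q2R_1 | rewrite RMicromega.Q2R_0]; ring.
Qed.

Lemma even_span_rsum K (h : nat -> Q) (f : nat -> R -> R) a L :
  (forall j, (a <= j < a + L)%nat -> even_span K (f j)) ->
  even_span K (fun u => rsum (fun j => Q2R (h j) * f j u) a L).
Proof.
  revert a; induction L as [|L IH]; intros a Hf.
  - apply even_span_zero.
  - apply even_span_plus.
    + apply even_span_scal, Hf; lia.
    + apply IH; intros j Hj; apply Hf; lia.
Qed.

Lemma even_span_mono j K f : (j <= K)%nat -> even_span j f -> even_span K f.
Proof.
  intros HjK [h Hh].
  apply (even_span_ext K (fun u => rsum (fun i => Q2R (h i) * sym_poly (2 * i) u) 0 (S j)));
    [intros u; symmetry; apply Hh|].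
  apply even_span_rsum; intros i Hi; apply even_span_sym_poly; lia.
Qed.

Lemma even_span_minus K f g :
  even_span K f -> even_span K g -> even_span K (fun u => f u - g u).
Proof.
  intros Hf Hg; apply (even_span_ext K (fun u => f u + Q2R (-1) * g u)).
  - intros u; replace (Q2R (-1)) with (-1) by (unfold Q2R; simpl; field); ring.
  - apply even_span_plus, even_span_scal; assumption.
Qed.

(* The recursion [u p_c = p_(c+1) - p_(c+2)] trades multiplication by [u]
   for a shift of index, so no degree argument is needed. *)
Lemma sym_poly_odd_even_span K : even_span K (sym_poly (S (2 * K))).
Proof.
  induction K as [K IH] using lt_wf_ind; destruct K as [|K].
  - exists (fun _ => 1 # 2)%Q; intros u; unfold rsum; simpl; unfold Q2R; simpl; field.
  - destruct (IH K ltac:(lia)) as [h Hh].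
    apply (even_span_ext _ (fun u => sym_poly (2 * S K) u - rsum (fun j => Q2R (h j)
             * (sym_poly (S (2 * j)) u - sym_poly (2 * S j) u)) 0 (S K))).
    { intros u; replace (S (2 * S K)) with (S (S (S (2 * K)))) by lia.
      rewrite sym_poly_SS, Hh, <- rsum_scal.
      replace (S (S (2 * K))) with (2 * S K)%nat by lia; f_equal.
      apply rsum_ext; intros j; replace (2 * S j)%nat with (S (S (2 * j))) by lia.
      rewrite sym_poly_SS; ring. }
    apply even_span_minus; [apply even_span_sym_poly; lia|].
    apply even_span_rsum; intros j Hj; apply even_span_minus.
    + apply (even_span_mono j); [lia | apply IH; lia].
    + apply even_span_sym_poly; lia.
Qed.

Lemma dz_coef_odd K : exists h : nat -> Q, forall n,
  dz_coef (S (2 * K)) n = rsum (fun j => Q2R (h j) * dz_coef (2 * j) n) 0 (S K).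
Proof.
  destruct (sym_poly_odd_even_span K) as [h Hh]; exists h; intros n.
  apply Rmult_eq_reg_l with 2; [|lra].
  rewrite dz_coef_sym, <- rsum_scal.
  rewrite (rsum_ext (fun m => sym_poly _ _)
             (fun m => rsum (fun j => Q2R (h j)
                * sym_poly (2 * j) (INR m / INR n * (1 - INR m / INR n))) 0 (S K)))
    by (intros; apply Hh).
  rewrite rsum_swap; apply rsum_ext; intros j.
  rewrite rsum_scal, <- dz_coef_sym; ring.
Qed.

(** * Independence of the even coefficients *)

Definition zsum (f : nat -> Z) (l : list nat) : Z := fold_right Z.add 0%Z (map f l).

Lemma zsum_app f l1 l2 : zsum f (l1 ++ l2) = (zsum f l1 + zsum f l2)%Z.
Proof. unfold zsum; rewrite map_app, fold_right_app; induction l1 as [|x l IH]; simpl; lia. Qed.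

Lemma zsum_ext f g l : (forall m, f m = g m) -> zsum f l = zsum g l.
Proof. intros H; unfold zsum; f_equal; apply map_ext; exact H. Qed.

Lemma zsum_plus f g l : zsum (fun m => f m + g m)%Z l = (zsum f l + zsum g l)%Z.
Proof. induction l as [|x l IH]; unfold zsum in *; simpl; lia. Qed.

Lemma zsum_divide d f l : (forall m, In m l -> (d | f m)%Z) -> (d | zsum f l)%Z.
Proof.
  induction l as [|x l IH]; intros H; [apply Z.divide_0_r|].
  apply Z.divide_add_r; [apply H; left; reflexivity | apply IH; intros; apply H; right; assumption].
Qed.

Lemma zsum_seq_shift f a b n :
  zsum f (seq (a + b) n) = zsum (fun m => f (a + m)%nat) (seq b n).
Proof.
  revert b; induction n as [|n IH]; intros b; [reflexivity|].
  unfold zsum in *; simpl; rewrite <- IH, Nat.add_succ_r; reflexivity.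
Qed.

Lemma IZR_zsum f a n : IZR (zsum f (seq a n)) = rsum (fun m => IZR (f m)) a n.
Proof.
  revert a; induction n as [|n IH]; intros a; [reflexivity|].
  change (zsum f (seq a (S n))) with (f a + zsum f (seq (S a) n))%Z.
  rewrite plus_IZR, IH; reflexivity.
Qed.

Section TwoAdic.
Local Open Scope Z_scope.

Lemma sub_divide_pow_sub x y n : (x - y | x ^ Z.of_nat n - y ^ Z.of_nat n).
Proof.
  induction n as [|n [w Hw]]; [exists 0; reflexivity|].
  rewrite Nat2Z.inj_succ, !Z.pow_succ_r by lia.
  exists (x * w + y ^ Z.of_nat n).
  replace (x * x ^ Z.of_nat n - y * y ^ Z.of_nat n)
    with (x * (x ^ Z.of_nat n - y ^ Z.of_nat n) + y ^ Z.of_nat n * (x - y)) by ring.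
  rewrite Hw; ring.
Qed.

Lemma shift_even_pow_divide m b j :
  (4 * b | (m + 2 * b) ^ Z.of_nat (2 * j) - m ^ Z.of_nat (2 * j)).
Proof.
  rewrite Nat2Z.inj_mul, !Z.pow_mul_r by lia.
  eapply Z.divide_trans; [|apply sub_divide_pow_sub].
  exists (m + b); change (Z.of_nat 2) with 2; ring.
Qed.

Definition even_power_sum (j k : nat) : Z :=
  zsum (fun m => Z.of_nat m ^ Z.of_nat (2 * j)) (seq 1 (2 ^ k - 1)).

(* Split [1 .. 2^(k+2) - 1] at [a = 2^(k+1)]: the upper half repeats the lower half
   modulo [2^(k+2)], and [a^2j] is itself divisible by [2^(k+2)]. *)
Lemma even_power_sum_2adic j k : (1 <= j)%nat ->
  exists t, Z.Odd t /\ even_power_sum j (S k) = 2 ^ Z.of_nat k * t.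
Proof.
  intros Hj; induction k as [|k [t [Ht IH]]].
  - exists 1; split; [exists 0; reflexivity|].
    unfold even_power_sum, zsum; simpl; rewrite Z.pow_1_l; lia.
  - set (F := fun m : nat => Z.of_nat m ^ Z.of_nat (2 * j)).
    set (a := (2 ^ S k)%nat).
    set (P := 2 ^ Z.of_nat k).
    assert (HP : 0 < P) by (apply Z.pow_pos_nonneg; lia).
    assert (Ha : Z.of_nat a = 2 * P)
      by (unfold a, P; rewrite Nat.pow_succ_r', Nat2Z.inj_mul, Nat2Z.inj_pow; reflexivity).
    assert (Hseq : seq 1 (2 ^ S (S k) - 1)
                   = seq 1 (a - 1) ++ a :: seq (a + 1) (a - 1)).
    { replace (2 ^ S (S k) - 1)%nat with ((a - 1) + S (a - 1))%nat
        by (rewrite (Nat.pow_succ_r' 2 (S k)); fold a; lia).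
      rewrite seq_app; replace (1 + (a - 1))%nat with a by lia.
      rewrite Nat.add_1_r; reflexivity. }
    assert (Dshift : forall m, (4 * P | F (a + m)%nat - F m)).
    { intros m; unfold F; rewrite Nat2Z.inj_add, Ha, Z.add_comm; apply shift_even_pow_divide. }
    assert (Dtop : (4 * P | F a)).
    { unfold F; destruct j as [|j']; [lia|].
      replace (2 * S j')%nat with (2 + 2 * j')%nat by lia.
      rewrite Nat2Z.inj_add, Z.pow_add_r, Ha by lia.
      exists (P * (2 * P) ^ Z.of_nat (2 * j')); change (Z.of_nat 2) with 2; ring. }
    destruct (zsum_divide _ (fun m => F (a + m)%nat - F m) (seq 1 (a - 1)) (fun m _ => Dshift m))
      as [w1 H1].
    destruct Dtop as [w2 H2].
    exists (t + 2 * (w1 + w2)); split.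
    + destruct Ht as [p Hp]; exists (p + (w1 + w2)); lia.
    + unfold even_power_sum at 1; rewrite Hseq; fold F; rewrite zsum_app.
      change (zsum F (a :: seq (a + 1) (a - 1))) with (F a + zsum F (seq (a + 1) (a - 1))).
      rewrite zsum_seq_shift.
      rewrite (zsum_ext (fun m => F (a + m)%nat) (fun m => F m + (F (a + m)%nat - F m)))
        by (intros; ring).
      rewrite zsum_plus, H1, H2.
      change (zsum F (seq 1 (a - 1))) with (even_power_sum j (S k)); rewrite IH.
      rewrite Nat2Z.inj_succ, Z.pow_succ_r by lia; fold P; ring.
Qed.

Lemma pow2_coprime_odd n t : Z.Odd t -> Z.gcd (2 ^ Z.of_nat n) t = 1.
Proof.
  intros [p Hp]; apply Zgcd_1_rel_prime, rel_prime_sym, Zpow_facts.rel_prime_Zpower_r; [lia|].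
  apply rel_prime_sym, prime_rel_prime; [apply prime_2|]; intros [c Hc]; lia.
Qed.

Lemma top_coef_divisible K (z : nat -> Z) k : (1 <= K)%nat ->
  zsum (fun j => z j * even_power_sum j (S k) * 2 ^ Z.of_nat (2 * S k * (K - j)))
       (seq 0 (S K)) = 0 ->
  (2 ^ Z.of_nat (S (S k)) | z K).
Proof.
  intros HK H.
  rewrite seq_S, zsum_app in H.
  change (zsum ?f (0 + K :: nil)%nat) with (f (0 + K)%nat + 0) in H.
  rewrite Nat.add_0_l, Nat.sub_diag, Nat.mul_0_r, Z.mul_1_r, Z.add_0_r in H.
  destruct (even_power_sum_2adic K k HK) as [t [Ht Hs]]; rewrite Hs in H.
  set (M := 2 ^ Z.of_nat (2 * S k)) in *.
  assert (HM : M = 2 ^ Z.of_nat k * 2 ^ Z.of_nat (S (S k))).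
  { unfold M; rewrite <- Z.pow_add_r by lia; f_equal; lia. }
  assert (Hlow : (M | zsum (fun j => z j * even_power_sum j (S k)
                                     * 2 ^ Z.of_nat (2 * S k * (K - j)))
                           (seq 0 K))).
  { apply zsum_divide; intros j Hj; apply in_seq in Hj.
    replace (K - j)%nat with (S (K - j - 1)) by lia; rewrite Nat.mul_succ_r, Nat.add_comm.
    rewrite Nat2Z.inj_add, Z.pow_add_r by apply Nat2Z.is_nonneg; fold M.
    apply Z.divide_mul_r, Z.divide_factor_l. }
  assert (Htop : (M | z K * (2 ^ Z.of_nat k * t))).
  { apply Z.divide_opp_r; replace (- _) with (zsum (fun j => z j * even_power_sum j (S k)
      * 2 ^ Z.of_nat (2 * S k * (K - j))) (seq 0 K)) by lia.
    exact Hlow. }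
  rewrite HM, (Z.mul_comm (z K)), <- Z.mul_assoc in Htop.
  apply Z.mul_divide_cancel_l in Htop; [|apply Z.pow_nonzero; lia].
  apply (Z.gauss _ t); [exact Htop | apply pow2_coprime_odd, Ht].
Qed.

Lemma top_coef_zero K (z : nat -> Z) : (1 <= K)%nat ->
  (forall k, zsum (fun j => z j * even_power_sum j (S k) * 2 ^ Z.of_nat (2 * S k * (K - j)))
                  (seq 0 (S K)) = 0) ->
  z K = 0.
Proof.
  intros HK H.
  destruct (Z.eq_dec (z K) 0) as [Hz|Hz]; [exact Hz|exfalso].
  set (k := Z.to_nat (Z.abs (z K))).
  pose proof (Zdivide_bounds _ _ (top_coef_divisible K z k HK (H k)) Hz) as Hle.
  pose proof (Z.pow_gt_lin_r 2 (Z.of_nat (S (S k))) ltac:(lia) ltac:(lia)) as Hlt.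
  assert (Hpos : 0 < 2 ^ Z.of_nat (S (S k))) by (apply Z.pow_pos_nonneg; lia).
  unfold k in *; rewrite Z.abs_eq in Hle by lia; lia.
Qed.

End TwoAdic.

Lemma dz_coef_pow2 j k :
  dz_coef (2 * j) (2 ^ k) = IZR (even_power_sum j k) / (2 ^ k) ^ (2 * j).
Proof.
  unfold dz_coef, even_power_sum; rewrite IZR_zsum, pow_INR; f_equal.
  apply rsum_ext; intros m; rewrite <- pow_IZR, <- INR_IZR_INZ; reflexivity.
Qed.

Lemma dz_coef_even_indep_Z K (z : nat -> Z) :
  (forall k, rsum (fun j => IZR (z j) * dz_coef (2 * j) (2 ^ S k)) 0 (S K) = 0) ->
  forall j, (j <= K)%nat -> z j = 0%Z.
Proof.
  induction K as [|K IH]; intros H j Hj.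
  - specialize (H 0%nat); unfold dz_coef, rsum in H; simpl in H.
    replace j with 0%nat by lia; apply eq_IZR; lra.
  - assert (Htop : z (S K) = 0%Z).
    { apply top_coef_zero; [lia|]; intros k; apply eq_IZR.
      rewrite IZR_zsum, <- (Rmult_0_r ((2 ^ S k) ^ (2 * S K))), <- (H k), <- rsum_scal.
      apply rsum_ext_in; intros i Hi.
      rewrite dz_coef_pow2, !mult_IZR, <- pow_IZR.
      replace (2 * S K)%nat with (2 * i + 2 * (S K - i))%nat by lia.
      rewrite pow_add, <- (pow_mult 2 (S k) (2 * (S K - i))).
      replace (S k * (2 * (S K - i)))%nat with (2 * S k * (S K - i))%nat by ring.
      field; apply pow_nonzero, pow_nonzero; lra. }
    destruct (Nat.eq_dec j (S K)) as [->|Hne]; [exact Htop|].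
    apply IH; [|lia]; intros k; specialize (H k).
    rewrite rsum_Sr, Nat.add_0_l, Htop, Rmult_0_l, Rplus_0_r in H; exact H.
Qed.

Lemma common_denominator (q : nat -> Q) K : exists (D : Z) (z : nat -> Z),
  D <> 0%Z /\ forall j, (j <= K)%nat -> Q2R (q j) * IZR D = IZR (z j).
Proof.
  induction K as [|K [D [z [HD Hz]]]].
  - exists (Z.pos (Qden (q 0%nat))), (fun _ => Qnum (q 0%nat)); split; [lia|].
    intros j Hj; replace j with 0%nat by lia; unfold Q2R; field; apply eq_IZR_contrapositive; lia.
  - exists (D * Z.pos (Qden (q (S K))))%Z,
      (fun j => if (j =? S K)%nat then (Qnum (q (S K)) * D)%Z
                else (z j * Z.pos (Qden (q (S K))))%Z).
    split; [lia|]; intros j Hj; rewrite mult_IZR.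
    destruct (Nat.eqb_spec j (S K)) as [->|Hne].
    + rewrite mult_IZR; unfold Q2R; field; apply eq_IZR_contrapositive; lia.
    + rewrite mult_IZR, <- Hz by lia; ring.
Qed.

Lemma dz_coef_even_indep K (q : nat -> Q) :
  (forall k, rsum (fun j => Q2R (q j) * dz_coef (2 * j) (2 ^ S k)) 0 (S K) = 0) ->
  forall j, (j <= K)%nat -> (q j == 0)%Q.
Proof.
  intros H j Hj.
  destruct (common_denominator q K) as [D [z [HD Hz]]].
  assert (Hzj : z j = 0%Z).
  { apply (dz_coef_even_indep_Z K); [|exact Hj]; intros k.
    rewrite (rsum_ext_in _ (fun i => IZR D * (Q2R (q i) * dz_coef (2 * i) (2 ^ S k)))).
    - rewrite rsum_scal, H; ring.
    - intros i Hi; rewrite <- Hz by lia; ring. }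
  apply eqR_Qeq; rewrite RMicromega.Q2R_0.
  apply (Rmult_eq_reg_r (IZR D)); [|apply eq_IZR_contrapositive; exact HD].
  rewrite Hz, Hzj by exact Hj; ring.
Qed.

(** * Dirichlet series with linearly bounded coefficients *)

Definition rpow_neg (p : R) (n : nat) : R := exp (- p * ln (INR n)).

Lemma rpow_neg_pos p n : 0 < rpow_neg p n.
Proof. apply exp_pos. Qed.

(* Stdlib's [ln] is [0] on nonpositive reals, so the junk value at [n = 0] is [1]. *)
Lemma rpow_neg_0 p : rpow_neg p 0 = 1.
Proof.
  unfold rpow_neg, ln.
  destruct (Rlt_dec 0 (INR 0)) as [H|_]; [exfalso; exact (Rlt_irrefl 0 H)|].
  rewrite Rmult_0_r; apply exp_0.
Qed.

Lemma rpow_neg_1 p : rpow_neg p 1 = 1.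
Proof. unfold rpow_neg; simpl; rewrite ln_1, Rmult_0_r; apply exp_0. Qed.

Lemma rpow_neg_mul_n p n : (1 <= n)%nat -> rpow_neg p n * INR n = rpow_neg (p - 1) n.
Proof.
  intros Hn; unfold rpow_neg; rewrite <- (exp_ln (INR n)) at 2 by (apply lt_0_INR; lia).
  rewrite <- exp_plus; f_equal; ring.
Qed.

Lemma inv_le_ln_diff (n : nat) : (2 <= n)%nat -> / INR n <= ln (INR n) - ln (INR (n - 1)).
Proof.
  intros Hn.
  assert (Hy : 1 <= INR (n - 1)) by (apply (le_INR 1); lia).
  assert (Hx : INR n = INR (n - 1) + 1) by (rewrite <- S_INR; f_equal; lia).
  assert (Hq : 0 < INR (n - 1) / INR n) by (apply Rdiv_lt_0_compat; lra).
  assert (Hl : ln (INR (n - 1) / INR n) <= INR (n - 1) / INR n - 1).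
  { pose proof (exp_ineq1_le (ln (INR (n - 1) / INR n))) as He; rewrite exp_ln in He; lra. }
  rewrite ln_div in Hl by lra.
  replace (INR (n - 1) / INR n - 1) with (- / INR n) in Hl by (rewrite Hx; field; lra); lra.
Qed.

Lemma rpow_neg_telescoping p n : 1 < p -> (2 <= n)%nat ->
  rpow_neg p n <= / (p - 1) * (rpow_neg (p - 1) (n - 1) - rpow_neg (p - 1) n).
Proof.
  intros Hp Hn; unfold rpow_neg.
  pose proof (inv_le_ln_diff n Hn) as G.
  assert (Hn0 : 0 < INR n) by (apply lt_0_INR; lia).
  set (L := ln (INR n)) in *; set (L1 := ln (INR (n - 1))) in *; set (a := p - 1).
  assert (Ha : 0 < a) by (unfold a; lra).
  assert (Hinv : / INR n = exp (- L)) by (unfold L; rewrite exp_Ropp, exp_ln; auto).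
  replace (exp (- a * L1)) with (exp (- a * L) * exp (a * (L - L1)))
    by (rewrite <- exp_plus; f_equal; ring).
  replace (exp (- p * L)) with (exp (- a * L) * / INR n)
    by (rewrite Hinv, <- exp_plus; f_equal; unfold a; ring).
  pose proof (exp_ineq1_le (a * (L - L1))) as X.
  pose proof (exp_pos (- a * L)) as Hpos.
  apply Rmult_le_reg_l with a; [exact Ha|].
  replace (a * (/ a * (exp (- a * L) * exp (a * (L - L1)) - exp (- a * L))))
    with (exp (- a * L) * (exp (a * (L - L1)) - 1)) by (field; lra).
  rewrite <- Rmult_assoc, (Rmult_comm a), Rmult_assoc.
  apply Rmult_le_compat_l; [lra|].
  apply Rle_trans with (a * (L - L1)); [apply Rmult_le_compat_l|]; lra.
Qed.

Lemma ex_series_nonneg_bounded (a : nat -> R) (M : R) :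
  (forall n, 0 <= a n) -> (forall N, sum_f_R0 a N <= M) -> ex_series a.
Proof.
  intros Hpos HM.
  destruct (ex_finite_lim_seq_incr (sum_n a) M) as [l Hl].
  - intros n; rewrite sum_Sn; unfold plus; simpl; specialize (Hpos (S n)); lra.
  - intros n; rewrite sum_n_Reals; apply HM.
  - exists l; exact Hl.
Qed.

Lemma ex_series_rpow_neg p : 1 < p -> ex_series (rpow_neg p).
Proof.
  intros Hp; apply ex_series_nonneg_bounded with (2 + / (p - 1)).
  - intros n; left; apply rpow_neg_pos.
  - assert (Hi : 0 < / (p - 1)) by (apply Rinv_0_lt_compat; lra).
    assert (Hpart : forall N, (1 <= N)%nat ->
              sum_f_R0 (rpow_neg p) N <= 2 + / (p - 1) * (1 - rpow_neg (p - 1) N)).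
    { induction N as [|[|N] IH]; intros HN; [lia| |].
      - simpl; rewrite rpow_neg_0, !rpow_neg_1; lra.
      - pose proof (rpow_neg_telescoping p (S (S N)) Hp ltac:(lia)) as T.
        replace (S (S N) - 1)%nat with (S N) in T by lia.
        rewrite tech5; specialize (IH ltac:(lia)); nra. }
    intros [|N].
    + simpl; rewrite rpow_neg_0; lra.
    + specialize (Hpart (S N) ltac:(lia)); pose proof (rpow_neg_pos (p - 1) (S N)); nra.
Qed.

Definition lin_bounded (a : nat -> R) : Prop := exists M, forall n, Rabs (a n) <= M * INR n.

Lemma lin_bounded_plus a b : lin_bounded a -> lin_bounded b -> lin_bounded (fun n => a n + b n).
Proof.
  intros [M1 H1] [M2 H2]; exists (M1 + M2); intros n.
  eapply Rle_trans; [apply Rabs_triang|]; specialize (H1 n); specialize (H2 n); lra.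
Qed.

Lemma lin_bounded_scal r a : lin_bounded a -> lin_bounded (fun n => r * a n).
Proof.
  intros [M H]; exists (Rabs r * M); intros n; rewrite Rabs_mult, Rmult_assoc.
  apply Rmult_le_compat_l; [apply Rabs_pos | apply H].
Qed.

Lemma lin_bounded_dz_coef c : lin_bounded (dz_coef c).
Proof.
  exists 1; intros n; destruct (dz_coef_bounds c n); rewrite Rabs_pos_eq; lra.
Qed.

Lemma ex_series_abs_dirichlet p (w a : nat -> R) : 2 < p ->
  (forall n, Rabs (w n) <= rpow_neg p n) -> lin_bounded a ->
  ex_series (fun n => Rabs (w n * a n)).
Proof.
  intros Hp Hw [M Ha].
  assert (HM : 0 <= M)
    by (specialize (Ha 1%nat); simpl INR in Ha; pose proof (Rabs_pos (a 1%nat)); lra).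
  apply (@ex_series_le R_AbsRing R_CompleteNormedModule _ (fun n => M * rpow_neg (p - 1) n)).
  - intros [|n]; change (norm ?x) with (Rabs x); rewrite Rabs_Rabsolu, Rabs_mult.
    + specialize (Ha 0%nat); simpl INR in Ha; rewrite Rmult_0_r in Ha.
      replace (Rabs (a 0%nat)) with 0 by (pose proof (Rabs_pos (a 0%nat)); lra).
      pose proof (rpow_neg_pos (p - 1) 0); nra.
    + rewrite <- rpow_neg_mul_n by lia.
      specialize (Hw (S n)); specialize (Ha (S n)).
      pose proof (Rabs_pos (w (S n))); pose proof (Rabs_pos (a (S n))).
      pose proof (pos_INR (S n)); pose proof (rpow_neg_pos p (S n)).
      apply Rle_trans with (rpow_neg p (S n) * (M * INR (S n))); [apply Rmult_le_compat|]; nra.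
  - apply (ex_series_scal_l M (rpow_neg (p - 1))), ex_series_rpow_neg; lra.
Qed.

Lemma ex_series_rpow_neg_abs p a : 2 < p -> lin_bounded a ->
  ex_series (fun n => rpow_neg p n * Rabs (a n)).
Proof.
  intros Hp Ha.
  assert (Hpos : forall n, Rabs (rpow_neg p n) = rpow_neg p n)
    by (intros n; apply Rabs_pos_eq; left; apply rpow_neg_pos).
  eapply ex_series_ext; [|apply (ex_series_abs_dirichlet p (rpow_neg p) a Hp); [|exact Ha]].
  - intros n; cbv beta; rewrite Rabs_mult, Hpos; reflexivity.
  - intros n; rewrite Hpos; apply Rle_refl.
Qed.

Lemma npow_neg_re s n : Re (npow_neg n s) = rpow_neg (Re s) n * cos (Im s * ln (INR n)).
Proof. unfold npow_neg, rpow_neg, Cmult, RtoC, Re, Im; simpl; ring. Qed.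

Lemma npow_neg_im s n : Im (npow_neg n s) = - (rpow_neg (Re s) n * sin (Im s * ln (INR n))).
Proof. unfold npow_neg, rpow_neg, Cmult, RtoC, Re, Im; simpl; ring. Qed.

Lemma npow_neg_re_bound s n : Rabs (Re (npow_neg n s)) <= rpow_neg (Re s) n.
Proof.
  rewrite npow_neg_re, Rabs_mult, (Rabs_pos_eq (rpow_neg _ _)) by (left; apply rpow_neg_pos).
  rewrite <- (Rmult_1_r (rpow_neg _ _)) at 2.
  apply Rmult_le_compat_l; [left; apply rpow_neg_pos | apply Rabs_le, COS_bound].
Qed.

Lemma npow_neg_im_bound s n : Rabs (Im (npow_neg n s)) <= rpow_neg (Re s) n.
Proof.
  rewrite npow_neg_im, Rabs_Ropp, Rabs_mult, (Rabs_pos_eq (rpow_neg _ _))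
    by (left; apply rpow_neg_pos).
  rewrite <- (Rmult_1_r (rpow_neg _ _)) at 2.
  apply Rmult_le_compat_l; [left; apply rpow_neg_pos | apply Rabs_le, SIN_bound].
Qed.

Definition dirichlet (a : nat -> R) (s : C) : C :=
  (Series (fun n => Re (npow_neg n s) * a n), Series (fun n => Im (npow_neg n s) * a n)).

Lemma dirichlet_plus a b s : Hdom s -> lin_bounded a -> lin_bounded b ->
  dirichlet (fun n => a n + b n) s = Cplus (dirichlet a s) (dirichlet b s).
Proof.
  intros Hs Ha Hb.
  assert (Hex : forall w c, (forall n, Rabs (w n) <= rpow_neg (Re s) n) -> lin_bounded c ->
                  ex_series (fun n => w n * c n))
    by (intros w c Hw Hc; apply ex_series_Rabs, (ex_series_abs_dirichlet (Re s)); assumption).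
  unfold dirichlet, Cplus; cbn [fst snd]; f_equal; rewrite <- Series_plus;
    try (apply Series_ext; intros n; ring);
    apply Hex; auto using npow_neg_re_bound, npow_neg_im_bound.
Qed.

Lemma dirichlet_scal r a s : dirichlet (fun n => r * a n) s = Cmult (RtoC r) (dirichlet a s).
Proof.
  unfold dirichlet, Cmult, RtoC; cbn [fst snd]; f_equal; rewrite <- Series_scal_l;
    [rewrite <- (Rminus_0_r (Series _)) | rewrite <- (Rplus_0_r (Series _))];
    f_equal; try ring; apply Series_ext; intros n; ring.
Qed.

Lemma dz_term_dirichlet c s n :
  dz_term c s n = Cmult (npow_neg n s) (RtoC (dz_coef c n)).
Proof.
  destruct n as [|n].
  - unfold dz_term, dz_coef, rsum; simpl; unfold Rdiv; rewrite Rmult_0_l, !Cmult_0_r; reflexivity.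
  - assert (Hexp : exp (- (Re s + INR c) * ln (INR (S n)))
                   = exp (- Re s * ln (INR (S n))) * / INR (S n) ^ c).
    { rewrite <- Rpower_pow by (apply lt_0_INR; lia); unfold Rpower.
      rewrite <- exp_Ropp, <- exp_plus; f_equal; ring. }
    unfold dz_term, npow_neg, dz_coef, Cmult, Cplus, RtoC, Re, Im in *; cbn [fst snd] in *.
    rewrite Rplus_0_r, Hexp; fold (rsum (fun m => INR m ^ c) 1 (S n - 1)).
    f_equal; unfold Rdiv; ring.
Qed.

Lemma dzeta_dirichlet c s : dzeta c s = dirichlet (dz_coef c) s.
Proof.
  unfold dzeta, dirichlet; f_equal; apply Series_ext; intros n;
    rewrite dz_term_dirichlet; unfold Cmult, RtoC, Re, Im; cbn [fst snd]; ring.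
Qed.

Lemma dirichlet_tail_bound p k a : 2 < p -> lin_bounded a ->
  (forall n, (n < k)%nat -> a n = 0) -> Series (fun n => rpow_neg p n * a n) = 0 ->
  rpow_neg p k * Rabs (a k) <= Series (fun j => rpow_neg p (S k + j) * Rabs (a (S k + j)%nat)).
Proof.
  intros Hp Ha Hlow HS.
  set (u := fun n => rpow_neg p n * a n).
  assert (Habs : ex_series (fun n => Rabs (u n))).
  { apply (ex_series_abs_dirichlet p); [exact Hp| |exact Ha].
    intros n; rewrite Rabs_pos_eq by (left; apply rpow_neg_pos); lra. }
  assert (Hshift : ex_series (fun j => Rabs (u (S k + j)%nat)))
    by (apply (ex_series_incr_n (fun n => Rabs (u n))), Habs).
  fold u in HS; rewrite (Series_incr_n_aux u k) in HS
    by (intros n Hn; unfold u; rewrite Hlow; [ring|lia]).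
  rewrite Series_incr_1, Nat.add_0_r in HS
    by (apply ex_series_Rabs, (ex_series_incr_n (fun n => Rabs (u n)) k), Habs).
  replace (rpow_neg p k * Rabs (a k)) with (Rabs (u k))
    by (unfold u; rewrite Rabs_mult, Rabs_pos_eq by (left; apply rpow_neg_pos); reflexivity).
  replace (u k) with (- Series (fun j => u (k + S j)%nat)) by lra.
  rewrite Rabs_Ropp.
  eapply Rle_trans; [apply Series_Rabs|].
  - eapply ex_series_ext; [|exact Hshift]; intros j; rewrite <- plus_n_Sm; reflexivity.
  - right; apply Series_ext; intros j; unfold u.
    rewrite <- plus_n_Sm, Rabs_mult, Rabs_pos_eq by (left; apply rpow_neg_pos); reflexivity.
Qed.

Lemma rpow_neg_ratio_decay N k m : (1 <= k)%nat -> (k < m)%nat ->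
  rpow_neg (3 + INR N) m / rpow_neg (3 + INR N) k
  <= (INR k / INR (S k)) ^ N * (rpow_neg 3 m / rpow_neg 3 k).
Proof.
  intros Hk Hm.
  assert (Hk0 : 0 < INR k) by (apply lt_0_INR; lia).
  assert (Hln : ln (INR (S k)) <= ln (INR m))
    by (apply ln_le; [apply lt_0_INR; lia | apply le_INR; lia]).
  rewrite <- Rpower_pow by (apply Rdiv_lt_0_compat; [lra | apply lt_0_INR; lia]).
  unfold Rpower, rpow_neg; rewrite ln_div by (try apply lt_0_INR; lia).
  unfold Rdiv; rewrite <- !exp_Ropp, <- !exp_plus.
  match goal with |- exp ?x <= exp ?y => assert (Hxy : x <= y) by (pose proof (pos_INR N); nra) end.
  destruct Hxy as [Hxy|Hxy]; [left; apply exp_increasing, Hxy | right; rewrite Hxy; reflexivity].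
Qed.

Lemma le_geometric_zero (x r C : R) : 0 <= r < 1 -> (forall N, Rabs x <= r ^ N * C) -> x = 0.
Proof.
  intros Hr Hx.
  assert (HC : 0 <= C) by (specialize (Hx 0%nat); pose proof (Rabs_pos x); simpl in Hx; lra).
  destruct (Req_dec x 0) as [Hz|Hnz]; [exact Hz|exfalso].
  assert (Hpos : 0 < Rabs x) by (apply Rabs_pos_lt, Hnz).
  destruct (pow_lt_1_zero r ltac:(rewrite Rabs_pos_eq; lra) (Rabs x / (C + 1)))
    as [N HN]; [apply Rdiv_lt_0_compat; lra|].
  specialize (HN N (le_n N)); specialize (Hx N).
  rewrite Rabs_pos_eq in HN by (apply pow_le; lra).
  assert (Hlt : Rabs x / (C + 1) * C < Rabs x).
  { apply Rmult_lt_reg_r with (C + 1); [lra|].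
    replace (Rabs x / (C + 1) * C * (C + 1)) with (Rabs x * C) by (field; lra); nra. }
  pose proof (Rmult_le_compat_r C _ _ HC (Rlt_le _ _ HN)); lra.
Qed.

(* Normalising by [k^p], the first nonzero coefficient [a k] is bounded by a tail
   decaying like [(k/(k+1))^p] as [p -> oo]. *)
Lemma leading_coef_decay a k : (1 <= k)%nat -> lin_bounded a ->
  (forall n, (n < k)%nat -> a n = 0) ->
  (forall p, 2 < p -> Series (fun n => rpow_neg p n * a n) = 0) ->
  exists C, forall N, Rabs (a k) <= (INR k / INR (S k)) ^ N * C.
Proof.
  intros Hk1 Ha Hlow HS.
  set (T := fun j => rpow_neg 3 (S k + j) * Rabs (a (S k + j)%nat)).
  assert (HT : ex_series T)
    by (apply (ex_series_incr_n (fun n => rpow_neg 3 n * Rabs (a n)) (S k)),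
               ex_series_rpow_neg_abs; [lra | exact Ha]).
  exists (Series T / rpow_neg 3 k); intros N; set (p := 3 + INR N); set (r := INR k / INR (S k)).
  assert (Hp : 2 < p) by (unfold p; pose proof (pos_INR N); lra).
  pose proof (dirichlet_tail_bound p k a Hp Ha Hlow (HS p Hp)) as Htail.
  pose proof (rpow_neg_pos p k) as Hpk; pose proof (rpow_neg_pos 3 k) as H3k.
  apply Rmult_le_reg_l with (rpow_neg p k); [exact Hpk|].
  eapply Rle_trans; [exact Htail|].
  replace (rpow_neg p k * (r ^ N * (Series T / rpow_neg 3 k)))
    with (Series (fun j => (rpow_neg p k * r ^ N / rpow_neg 3 k) * T j))
    by (rewrite Series_scal_l; field; lra).
  apply Series_le; [|apply (ex_series_scal_l _ T), HT].
  intros j; split; [apply Rmult_le_pos; [left; apply rpow_neg_pos | apply Rabs_pos]|].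
  pose proof (rpow_neg_ratio_decay N k (S k + j) Hk1 ltac:(lia)) as Hratio.
  fold p r in Hratio; unfold T.
  apply Rmult_le_compat_l with (r := rpow_neg p k) in Hratio; [|lra].
  replace (rpow_neg p k * (rpow_neg p (S k + j) / rpow_neg p k)) with (rpow_neg p (S k + j))
    in Hratio by (field; lra).
  pose proof (Rabs_pos (a (S k + j)%nat)).
  replace (rpow_neg p k * r ^ N / rpow_neg 3 k * (rpow_neg 3 (S k + j) * Rabs (a (S k + j)%nat)))
    with (rpow_neg p k * (r ^ N * (rpow_neg 3 (S k + j) / rpow_neg 3 k)) * Rabs (a (S k + j)%nat))
    by (field; lra).
  apply Rmult_le_compat_r; assumption.
Qed.

Lemma real_dirichlet_unique a : lin_bounded a ->
  (forall p, 2 < p -> Series (fun n => rpow_neg p n * a n) = 0) -> forall n, a n = 0.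
Proof.
  intros Ha HS k; induction k as [k IH] using lt_wf_ind.
  destruct k as [|k].
  - destruct Ha as [M HM]; specialize (HM 0%nat); simpl INR in HM.
    apply Rabs_eq_0; pose proof (Rabs_pos (a 0%nat)); lra.
  - destruct (leading_coef_decay a (S k) ltac:(lia) Ha IH HS) as [C HC].
    apply (le_geometric_zero _ (INR (S k) / INR (S (S k))) C); [|exact HC].
    assert (H0 : 0 < INR (S k)) by (apply lt_0_INR; lia).
    rewrite (S_INR (S k)); split; [apply Rdiv_le_0_compat; lra|].
    apply Rmult_lt_reg_r with (INR (S k) + 1); [lra|].
    unfold Rdiv; rewrite Rmult_assoc, Rinv_l; lra.
Qed.

Lemma dirichlet_ext a b s : (forall n, a n = b n) -> dirichlet a s = dirichlet b s.
Proof. intros H; unfold dirichlet; f_equal; apply Series_ext; intros n; rewrite H; reflexivity. Qed.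

Lemma dirichlet_zero s : dirichlet (fun _ => 0) s = RtoC 0.
Proof.
  rewrite (dirichlet_ext _ (fun n => 0 * 0)) by (intros; ring).
  rewrite dirichlet_scal; unfold Cmult, RtoC; cbn [fst snd]; f_equal; ring.
Qed.

Lemma dirichlet_zero_coef a : lin_bounded a ->
  (forall s, Hdom s -> dirichlet a s = RtoC 0) -> forall n, a n = 0.
Proof.
  intros Ha H; apply real_dirichlet_unique; [exact Ha|]; intros p Hp.
  specialize (H (p, 0) Hp); apply (f_equal Re) in H.
  change (Series (fun n => Re (npow_neg n (p, 0)) * a n) = 0) in H.
  rewrite <- H; apply Series_ext; intros n.
  rewrite npow_neg_re; unfold Re, Im; cbn [fst snd]; rewrite Rmult_0_l, cos_0; ring.
Qed.

Lemma dirichlet_if_scal (b : bool) r c s :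
  (if b then Cmult (RtoC r) (dzeta c s) else RtoC 0)
  = dirichlet (fun n => if b then r * dz_coef c n else 0) s.
Proof.
  destruct b; [rewrite dirichlet_scal, dzeta_dirichlet | rewrite dirichlet_zero]; reflexivity.
Qed.

Definition coef_comb (P : nat -> bool) (q : nat -> Q) (N n : nat) : R :=
  sum_f_R0 (fun c => if P c then Q2R (q c) * dz_coef c n else 0) N.

Lemma lin_bounded_if_scal (b : bool) r c : lin_bounded (fun n => if b then r * dz_coef c n else 0).
Proof.
  destruct b; [apply lin_bounded_scal, lin_bounded_dz_coef|].
  exists 0; intros n; rewrite Rabs_R0; lra.
Qed.

Lemma lin_bounded_coef_comb P q N : lin_bounded (coef_comb P q N).
Proof.
  induction N as [|N IH]; [apply lin_bounded_if_scal|].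
  unfold coef_comb; simpl; apply lin_bounded_plus; [exact IH | apply lin_bounded_if_scal].
Qed.

Lemma zcomb_dirichlet P q N s : Hdom s -> zcomb P q N s = dirichlet (coef_comb P q N) s.
Proof.
  intros Hs; unfold zcomb; induction N as [|N IH]; [apply dirichlet_if_scal|].
  simpl csum; rewrite IH, dirichlet_if_scal, <- dirichlet_plus;
    [reflexivity | exact Hs | apply lin_bounded_coef_comb | apply lin_bounded_if_scal].
Qed.

Lemma coef_comb_even_rsum q N n : coef_comb Nat.even q N n
  = rsum (fun j => Q2R (q (2 * j)%nat) * dz_coef (2 * j) n) 0 (S (Nat.div2 N)).
Proof. apply sum_f_R0_even. Qed.

Lemma lin_bounded_rsum (f : nat -> nat -> R) a d :
  (forall i, lin_bounded (f i)) -> lin_bounded (fun n => rsum (fun i => f i n) a d).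
Proof.
  intros Hf; revert a; induction d as [|d IH]; intros a.
  - exists 0; intros n; unfold rsum; simpl; rewrite Rabs_R0; lra.
  - apply lin_bounded_plus; [apply Hf | apply IH].
Qed.

Lemma fam_comb_dirichlet (q : nat -> Q) d s : Hdom s ->
  fam_comb (fun i => dzeta (2 * i)) q d s
  = dirichlet (fun n => rsum (fun i => Q2R (q i) * dz_coef (2 * i) n) 0 d) s.
Proof.
  intros Hs; unfold fam_comb.
  enough (Hgen : forall a, fold_right Cplus (RtoC 0)
             (map (fun i => Cmult (RtoC (Q2R (q i))) (dzeta (2 * i) s)) (seq a d))
           = dirichlet (fun n => rsum (fun i => Q2R (q i) * dz_coef (2 * i) n) a d) s)
    by apply Hgen.
  induction d as [|d IH]; intros a; [symmetry; apply dirichlet_zero|].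
  simpl map; simpl fold_right; rewrite IH, dzeta_dirichlet, <- dirichlet_scal, <- dirichlet_plus;
    [reflexivity | exact Hs | apply lin_bounded_scal, lin_bounded_dz_coef |].
  apply (lin_bounded_rsum (fun i n => Q2R (q i) * dz_coef (2 * i) n)); intros i.
  apply lin_bounded_scal, lin_bounded_dz_coef.
Qed.

Lemma zcomb_even_fam_comb q N s : Hdom s ->
  zcomb Nat.even q N s
  = fam_comb (fun i => dzeta (2 * i)) (fun i => q (2 * i)%nat) (Nat.div2 N + 1) s.
Proof.
  intros Hs; rewrite zcomb_dirichlet, fam_comb_dirichlet, Nat.add_1_r by exact Hs.
  apply dirichlet_ext, coef_comb_even_rsum.
Qed.

Lemma fam_comb_even_indep d (q : nat -> Q) :
  (forall s, Hdom s -> fam_comb (fun i => dzeta (2 * i)) q d s = RtoC 0) ->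
  forall i, (i < d)%nat -> (q i == 0)%Q.
Proof.
  intros H i Hi; destruct d as [|K]; [lia|].
  assert (Hcoef : forall n, rsum (fun j => Q2R (q j) * dz_coef (2 * j) n) 0 (S K) = 0).
  { apply dirichlet_zero_coef.
    - apply (lin_bounded_rsum (fun i n => Q2R (q i) * dz_coef (2 * i) n)); intros j.
      apply lin_bounded_scal, lin_bounded_dz_coef.
    - intros s Hs; rewrite <- fam_comb_dirichlet by exact Hs; apply H, Hs. }
  apply (dz_coef_even_indep K); [intros k; apply Hcoef | lia].
Qed.

Lemma coef_comb_S P q N n : coef_comb P q (S N) n
  = coef_comb P q N n + (if P (S N) then Q2R (q (S N)) * dz_coef (S N) n else 0).
Proof. reflexivity. Qed.

Lemma coef_comb_lin P q1 q2 r N n :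
  coef_comb P (fun c => q1 c + r * q2 c)%Q N n = coef_comb P q1 N n + Q2R r * coef_comb P q2 N n.
Proof.
  induction N as [|N IH]; [|rewrite !coef_comb_S, IH];
    unfold coef_comb; simpl; destruct (P _); rewrite ?Q2R_plus, ?Q2R_mult; ring.
Qed.

Lemma dz_coef_odd_comb K : exists h, forall n,
  dz_coef (S (2 * K)) n = coef_comb Nat.even h (2 * K) n.
Proof.
  destruct (dz_coef_odd K) as [h Hh]; exists (fun c => h (Nat.div2 c)); intros n.
  rewrite Hh, coef_comb_even_rsum, Nat.div2_double; apply rsum_ext; intros j.
  rewrite Nat.div2_double; reflexivity.
Qed.

Lemma coef_comb_all_even N q :
  exists q', forall n, coef_comb all_c q N n = coef_comb Nat.even q' N n.
Proof.
  induction N as [|N [q' Hq']]; [exists q; reflexivity|].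
  destruct (Nat.even (S N)) eqn:Hev.
  - exists (fun c => if (c =? S N)%nat then q (S N) else q' c); intros n.
    rewrite !coef_comb_S, Hq', Hev, Nat.eqb_refl; f_equal.
    apply sum_eq; intros c Hc.
    replace (c =? S N)%nat with false by (symmetry; apply Nat.eqb_neq; lia); reflexivity.
  - assert (HN : Nat.even N = true)
      by (rewrite Nat.even_succ, <- Nat.negb_even in Hev; destruct (Nat.even N); auto).
    apply Nat.even_spec in HN; destruct HN as [K ->].
    destruct (dz_coef_odd_comb K) as [h Hh].
    exists (fun c => q' c + q (S (2 * K)) * h c)%Q; intros n.
    rewrite !coef_comb_S, Hev, coef_comb_lin, <- Hq', <- Hh; unfold all_c; ring.
Qed.

Lemma ZN_even_iff N f : ZN N f <-> in_span Nat.even N f.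
Proof.
  split.
  - intros [q Hq]; destruct (coef_comb_all_even N q) as [q' Hq'].
    exists q'; intros s Hs; rewrite Hq, !zcomb_dirichlet by exact Hs; apply dirichlet_ext, Hq'.
  - intros [q Hq]; exists (fun c => if Nat.even c then q c else 0%Q); intros s Hs.
    rewrite Hq, !zcomb_dirichlet by exact Hs; apply dirichlet_ext; intros n.
    apply sum_eq; intros c _; unfold all_c; destruct (Nat.even c); [reflexivity|].
    rewrite RMicromega.Q2R_0; ring.
Qed.

Lemma lin_indep_even N : lin_indep Nat.even N.
Proof.
  intros q H c Hc Hev.
  apply Nat.even_spec in Hev; destruct Hev as [m ->].
  apply (fam_comb_even_indep (Nat.div2 N + 1) (fun i => q (2 * i)%nat)).
  - intros s Hs; rewrite <- zcomb_even_fam_comb by exact Hs; apply H, Hs.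
  - pose proof (Nat.div2_odd N); destruct (Nat.odd N); simpl in *; lia.
Qed.

Lemma ZN_dzeta_even N i : (i < Nat.div2 N + 1)%nat -> ZN N (dzeta (2 * i)).
Proof.
  intros Hi; apply ZN_even_iff.
  exists (fun c => if (Nat.div2 c =? i)%nat then 1%Q else 0%Q); intros s Hs.
  rewrite zcomb_dirichlet, dzeta_dirichlet by exact Hs; apply dirichlet_ext; intros n.
  rewrite coef_comb_even_rsum.
  rewrite (rsum_ext _ (fun j => if (j =? i)%nat then dz_coef (2 * j) n else 0)).
  - rewrite rsum_delta by lia; reflexivity.
  - intros j; rewrite Nat.div2_double; destruct (j =? i)%nat;
      [rewrite RMicromega.Q2R_1 | rewrite RMicromega.Q2R_0]; ring.
Qed.

Lemma ZN_Qdim N : has_Qdim (ZN N) (Nat.div2 N + 1).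
Proof.
  exists (fun i => dzeta (2 * i)); split; [|split].
  - apply ZN_dzeta_even.
  - apply fam_comb_even_indep.
  - intros f Hf; apply ZN_even_iff in Hf; destruct Hf as [q Hq].
    exists (fun i => q (2 * i)%nat); intros s Hs; rewrite Hq by exact Hs.
    apply zcomb_even_fam_comb, Hs.
Qed.

Theorem theorem2p2 :
  (forall N : nat,
      (* Z_N = (+)_{c even, c <= N} Q zeta(-c,s+c) *)
      lin_indep Nat.even N /\
      (forall f, ZN N f <-> in_span Nat.even N f) /\
      (* dim_Q Z_N = floor(N/2) + 1 *)
      has_Qdim (ZN N) (Nat.div2 N + 1)) /\
  (* Z = (+)_{c even, c >= 0} Q zeta(-c,s+c) *)
  (forall N : nat, lin_indep Nat.even N) /\
  (forall f, Zall f <-> exists N, in_span Nat.even N f).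
Proof.
  split; [|split].
  - intros N; split; [apply lin_indep_even | split; [apply ZN_even_iff | apply ZN_Qdim]].
  - apply lin_indep_even.
  - intros f; split; intros [N HN]; exists N; apply ZN_even_iff, HN.
Qed.
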